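(* Let $(\Omega,\mathcal R,\mathcal K)$ be a bidirectional kinetic system. Then $(\Omega,\mathcal R,\mathcal K)$ admits a closed completion $(\Omega_c,\mathcal R_c,\mathcal K_c)$ such that $\pi_\Omega R\neq0$ for every $R\in\mathcal R_c$, and every $R\in\mathcal R$ is the image $\pi_\Omega\bar R$ of exactly one $\bar R\in\mathcal R_c$.
   Context: A chemical network is $(\Omega,\mathcal R)$ with $\Omega=\{1,\dots,N\}$ and $\mathcal R$ a finite set of nonzero integer vectors indexed by $\Omega$. $I(R)=\{i:R(i)<0\}$, $F(R)=\{i:R(i)>0\}$. Bidirectional: $R\in\mathcal R\Rightarrow-R\in\mathcal R$; $\mathcal R_s$ contains exactly one of each pair $\{R,-R\}$. Conservation laws $\mathcal M=(\mathrm{span}\,\mathcal R)^\perp$; conservative means $\mathcal M\cap(0,\infty)^\Omega\ne\emptyset$. A kinetic system $(\Omega,\mathcal R,\mathcal K)$ has rates $\mathcal K:\mathcal R\to(0,\infty)$, $K_R=\mathcal K(R)$; it satisfies detailed balance if there is $\bar N\in(0,\infty)^\Omega$ with $K_R\prod_{i\in I(R)}\bar N_i^{-R(i)}=K_{-R}\prod_{i\in F(R)}\bar N_i^{R(i)}$ for all $R\in\mathcal R_s$. It is closed if it satisfies detailed balance, is conservative, and $I(R)\ne\emptyset$, $F(R)\ne\emptyset$ for all $R\in\mathcal R$. For $A\subset\Omega_c$, $\pi_Av=(v(i))_{i\in A}$. Given a kinetic system $(\Omega_c,\mathcal R_c,\mathcal K_c)$ with $\Omega\subset\Omega_c$ and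 positive $n=(n_i)_{i\in\Omega_c\setminus\Omega}$, the reduced rates are $\mathcal K_c[n](R)=\sum_{\bar R\in\mathcal R_c:\pi_\Omega\bar R=R}\mathcal K_c(\bar R)\prod_{s\in(\Omega_c\setminus\Omega)\cap I(\bar R)}n_s^{-\bar R(s)}$ for $R\in\{\pi_\Omega\bar R\}\setminus\{0\}$. A completion of $(\Omega,\mathcal R,\mathcal K)$ is a kinetic system $(\Omega_c,\mathcal R_c,\mathcal K_c)$ with $\Omega\subset\Omega_c$, $\mathcal R=\{\pi_\Omega R:R\in\mathcal R_c\}$, and such that there exist concentrations $n_{\Omega_c\setminus\Omega}=(n_i)_{i\in\Omega_c\setminus\Omega}$ with $\mathcal K=\mathcal K_c[n_{\Omega_c\setminus\Omega}]$. *)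

From HB Require Import structures.
From mathcomp Require Import all_boot all_order all_algebra.
From mathcomp Require Import finmap.
From mathcomp Require Import reals.
Set Implicit Arguments. Unset Strict Implicit. Unset Printing Implicit Defensive.
Import Order.TTheory GRing.Theory Num.Theory.
Local Open Scope ring_scope.
Local Open Scope fset_scope.

Definition vec (S : finType) := {ffun S -> int}.

Section Networks.
Variable R : realType.
Variable S : finType.

Definition chem_network (Rs : {fset vec S}) : Prop :=
  forall r, r \in Rs -> r != 0.

Definition rates_pos (Rs : {fset vec S}) (K : vec S -> R) : Prop :=
  forall r, r \in Rs -> 0 < K r.

Definition bidirectional (Rs : {fset vec S}) : Prop :=
  forall r, r \in Rs -> - r \in Rs.

(* detailed balance (presupposes bidirectionality); the defining identity is
   symmetric under r <-> -r, so requiring it for all r is the same as for R_s *)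
Definition detailed_balance (Rs : {fset vec S}) (K : vec S -> R) : Prop :=
  bidirectional Rs /\
  exists Nbar : S -> R, (forall i, 0 < Nbar i) /\
    forall r, r \in Rs ->
      K r * \prod_(i | r i < 0) Nbar i ^ (- r i)
      = K (- r) * \prod_(i | 0 < r i) Nbar i ^ (r i).

Definition conservative (Rs : {fset vec S}) : Prop :=
  exists m : S -> R, (forall i, 0 < m i) /\
    forall r, r \in Rs -> \sum_i m i * (r i)%:~R = 0.

Definition closed_system (Rs : {fset vec S}) (K : vec S -> R) : Prop :=
  [/\ detailed_balance Rs K, conservative Rs &
      forall r, r \in Rs -> (exists i, r i < 0) /\ (exists i, 0 < r i)].

End Networks.

(* Omega = 'I_N, Omega_c = 'I_N + 'I_M (Omega embedded via inl) *)
Definition proj (N M : nat) (v : vec ('I_N + 'I_M)%type) : vec 'I_N :=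
  [ffun i => v (inl i)].

Definition reduced_rates (R : realType) (N M : nat)
  (Rc : {fset vec ('I_N + 'I_M)%type}) (Kc : vec ('I_N + 'I_M)%type -> R)
  (n : 'I_M -> R) (r : vec 'I_N) : R :=
  \sum_(rb : Rc | proj (val rb) == r)
     Kc (val rb) * \prod_(s : 'I_M | val rb (inr s) < 0) n s ^ (- val rb (inr s)).

Definition completion (R : realType) (N M : nat)
  (Rs : {fset vec 'I_N}) (K : vec 'I_N -> R)
  (Rc : {fset vec ('I_N + 'I_M)%type}) (Kc : vec ('I_N + 'I_M)%type -> R) : Prop :=
  chem_network Rc /\ rates_pos Rc Kc /\
  Rs = [fset proj rb | rb in Rc] /\
  exists n : 'I_M -> R, (forall s, 0 < n s) /\
    forall r, r \in Rs -> K r = reduced_rates Rc Kc n r.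

(* Give every reaction r its own new species X_r, and lift r to the reaction
   that additionally turns one X_r into one X_(-r).  With all rates equal to 1
   and [X_r] = K_r, the reduced rate of the lift of r is exactly K_r.  Since r
   and -r then have equal rates, detailed balance holds at the equilibrium 1.
   The weights 1 on the old species and 1 + max(s_r, 0) on X_r, where s_r is
   the sum of the entries of r, are a positive conservation law, because
   s_r + max(-s_r, 0) - max(s_r, 0) = 0.  Every lift has the reactant X_r and
   the product X_(-r), and projection undoes lifting. *)
From HB Require Import structures.
From mathcomp Require Import all_boot all_order all_algebra.
From mathcomp Require Import finmap.
From mathcomp Require Import reals.
From mathcomp Require Import zify.
Import Order.TTheory GRing.Theory Num.Theory.
Local Open Scope fset_scope.
Local Open Scope ring_scope.
Set Implicit Arguments. Unset Strict Implicit. Unset Printing Implicit Defensive.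

Lemma vec_neq_opp (S : finType) (r : vec S) : r != 0 -> r != - r.
Proof.
apply: contra => /eqP r_eq_opp; apply/eqP/ffunP => i.
have /eqP := congr1 (fun v : vec S => v i) r_eq_opp.
by rewrite !ffunE -subr_eq0 opprK -mulr2n mulrn_eq0 => /eqP.
Qed.

Lemma detailed_balance_unit_rates (R : realType) (S : finType)
    (Rs : {fset vec S}) :
  bidirectional Rs -> detailed_balance Rs (fun _ => 1 : R).
Proof.
move=> Rs_bi; split=> //; exists (fun _ => 1).
split=> [_|r _]; first exact: ltr01.
by rewrite !big1 // => i _; rewrite exp1rz.
Qed.

Lemma conservative_int (R : realType) (S : finType) (Rs : {fset vec S})
    (w : S -> int) :
  (forall i, 0 < w i) -> (forall r, r \in Rs -> \sum_i w i * r i = 0) ->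
  conservative R Rs.
Proof.
move=> w_gt0 w_cons; exists (fun i => (w i)%:~R); split=> [i|r /w_cons w_r].
  by rewrite ltr0z.
have -> : \sum_i (w i)%:~R * (r i)%:~R = (\sum_i w i * r i)%:~R :> R.
  by rewrite rmorph_sum; apply: eq_bigr => i _; rewrite -intrM.
by rewrite w_r.
Qed.

Section Extension.
Variables N M : nat.

Definition extend (r : vec 'I_N) (e : vec 'I_M) : vec ('I_N + 'I_M)%type :=
  [ffun x => match x with inl i => r i | inr j => e j end].

Lemma proj_extend r e : proj (extend r e) = r.
Proof. by apply/ffunP => i; rewrite !ffunE. Qed.

Lemma extendN r e : extend (- r) (- e) = - extend r e.
Proof. by apply/ffunP => -[i|j]; rewrite !ffunE. Qed.

Lemma sum_extend (w : ('I_N + 'I_M)%type -> int) r e :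
  \sum_x w x * extend r e x
  = \sum_i w (inl i) * r i + \sum_j w (inr j) * e j.
Proof.
by rewrite big_sumType; congr (_ + _); apply: eq_bigr => i _; rewrite ffunE.
Qed.

(* The indices are plain naturals since the tag [index r Rs] used below is only
   in range for r in Rs. *)
Definition transfer (a b : nat) : vec 'I_M :=
  [ffun j : 'I_M => (nat_of_bool (j == b :> nat))%:Z
                    - (nat_of_bool (j == a :> nat))%:Z].

Lemma transferN a b : - transfer a b = transfer b a.
Proof. by apply/ffunP => j; rewrite !ffunE opprB. Qed.

Lemma transfer_lt0 a b j : a != b -> (transfer a b j < 0) = (j == a :> nat).
Proof.
rewrite ffunE => a_neq_b; have [->|_] := eqVneq (val j) a.
  by rewrite (negPf a_neq_b).
by case: (val j == b).
Qed.

Lemma transfer_gt0 a b j : a != b -> (0 < transfer a b j) = (j == b :> nat).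
Proof. by rewrite -transferN ffunE oppr_gt0 eq_sym => /transfer_lt0 ->. Qed.

Lemma transfer_src a b (j : 'I_M) : a != b -> val j = a -> transfer a b j = -1.
Proof. by rewrite ffunE => /negPf a_neq_b ->; rewrite eqxx a_neq_b. Qed.

Lemma transfer_dst a b (j : 'I_M) : a != b -> val j = b -> transfer a b j = 1.
Proof. by rewrite -transferN ffunE eq_sym => /transfer_src h /h ->. Qed.

Lemma sum_transfer (w : 'I_M -> int) (a b : 'I_M) :
  a != b -> \sum_j w j * transfer a b j = w b - w a.
Proof.
move=> a_neq_b; rewrite (bigD1 b) // (bigD1 a) //=.
rewrite big1 => [|j /andP[j_b j_a]].
  by rewrite transfer_dst ?transfer_src // addr0 mulr1 mulrN1.
by rewrite ffunE !val_eqE (negPf j_b) (negPf j_a) mulr0.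
Qed.

End Extension.

Section Lifting.
Variables (N : nat) (Rs : {fset vec 'I_N}).
Hypotheses (Rs_network : chem_network Rs) (Rs_bi : bidirectional Rs).

Local Notation M := #|` Rs|.
Local Notation tag r := (index r Rs).

Definition lift (r : vec 'I_N) : vec ('I_N + 'I_M)%type :=
  extend r (transfer M (tag r) (tag (- r))).

Definition lifted_network := [fset lift r | r in Rs].

Lemma proj_lift r : proj (lift r) = r.
Proof. exact: proj_extend. Qed.

Lemma liftN r : lift (- r) = - lift r.
Proof. by rewrite /lift opprK -extendN transferN. Qed.

Lemma tag_lt r : r \in Rs -> (tag r < M)%N.
Proof. by rewrite index_mem. Qed.

Lemma nth_tag r : r \in Rs -> nth 0 Rs (tag r) = r.
Proof. exact: nth_index. Qed.

Lemma tag_neq_opp r : r \in Rs -> tag r != tag (- r).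
Proof.
move=> r_in; apply: contraNneq (vec_neq_opp (Rs_network r_in)) => tag_eq.
by rewrite -{1}(nth_tag r_in) tag_eq nth_tag ?Rs_bi.
Qed.

Lemma mem_lift r : r \in Rs -> lift r \in lifted_network.
Proof. by move=> r_in; apply/imfsetP; exists r. Qed.

Lemma proj_lifted_network : [fset proj rb | rb in lifted_network] = Rs.
Proof.
rewrite -imfset_comp (@eq_in_imfset _ _ _ _ id) ?imfset_id // => r _ /=.
exact: proj_lift.
Qed.

Lemma lifted_network_nonzero : chem_network lifted_network.
Proof.
move=> _ /imfsetP[r r_in ->]; apply: contra_neq (Rs_network r_in) => lift0.
by rewrite -(proj_lift r) lift0; apply/ffunP => i; rewrite !ffunE.
Qed.

Lemma lifted_network_proj_nonzero rb : rb \in lifted_network -> proj rb != 0.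
Proof. by case/imfsetP => r r_in ->; rewrite proj_lift Rs_network. Qed.

Lemma lifted_network_bidirectional : bidirectional lifted_network.
Proof. by move=> _ /imfsetP[r r_in ->]; rewrite -liftN mem_lift ?Rs_bi. Qed.

Lemma lift_unique r :
  r \in Rs -> exists! rb, rb \in lifted_network /\ proj rb = r.
Proof.
move=> r_in; exists (lift r); split=> [|_ [/imfsetP[r' _ ->] <-]].
  by rewrite mem_lift ?proj_lift.
by rewrite !proj_lift.
Qed.

Lemma lift_reactant_product r :
  r \in Rs -> (exists x, lift r x < 0) /\ (exists x, 0 < lift r x).
Proof.
move=> r_in; have tag_ne := tag_neq_opp r_in.
split; first by exists (inr (Ordinal (tag_lt r_in))); rewrite ffunE transfer_lt0.
by exists (inr (Ordinal (tag_lt (Rs_bi r_in)))); rewrite ffunE transfer_gt0.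
Qed.

Lemma lifted_network_conservative (R : realType) : conservative R lifted_network.
Proof.
pose stoich (v : vec 'I_N) := \sum_i v i.
pose w (x : ('I_N + 'I_M)%type) : int :=
  if x is inr j then 1 + Num.max (stoich (nth 0 Rs j)) 0 else 1.
apply: (@conservative_int R _ _ w) => [[i|j] | _ /imfsetP[r r_in ->]] /=; try lia.
have tag_ne := tag_neq_opp r_in.
rewrite sum_extend (sum_transfer _ (a := Ordinal (tag_lt r_in))
                                  (b := Ordinal (tag_lt (Rs_bi r_in)))) //.
rewrite /w /= !nth_tag ?Rs_bi // (eq_bigr (fun i => r i)) => [|i _]; last first.
  by rewrite mul1r.
have -> : stoich (- r) = - stoich r.
  by rewrite /stoich -sumrN; apply: eq_bigr => i _; rewrite ffunE.
rewrite -/(stoich r); lia.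
Qed.

Lemma reduced_rates_lift (R : realType) (K : vec 'I_N -> R) r : r \in Rs ->
  reduced_rates lifted_network (fun _ => 1) (fun j => K (nth 0 Rs j)) r = K r.
Proof.
move=> r_in; have tag_ne := tag_neq_opp r_in.
rewrite /reduced_rates (big_pred1 [` mem_lift r_in]) => [|rb]; last first.
  rewrite /= -val_eqE /=; case/imfsetP: (valP rb) => r' _ ->.
  by rewrite proj_lift (can_eq proj_lift).
rewrite mul1r (big_pred1 (Ordinal (tag_lt r_in))) => [|j]; last first.
  by rewrite ffunE transfer_lt0 // -val_eqE.
by rewrite ffunE transfer_src // opprK expr1z nth_tag.
Qed.

End Lifting.

Theorem theorem6p3 (R : realType) (N : nat)
  (Rs : {fset vec 'I_N}) (K : vec 'I_N -> R) :
  chem_network Rs -> rates_pos Rs K -> bidirectional Rs ->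
  exists (M : nat) (Rc : {fset vec ('I_N + 'I_M)%type})
         (Kc : vec ('I_N + 'I_M)%type -> R),
    [/\ completion Rs K Rc Kc,
        closed_system Rc Kc,
        (forall rb, rb \in Rc -> proj rb != 0) &
        (forall r, r \in Rs ->
           exists! rb, rb \in Rc /\ proj rb = r)].
Proof.
move=> Rs_network K_pos Rs_bi.
exists #|` Rs|, (lifted_network Rs), (fun _ => 1); split.
- split; first exact: lifted_network_nonzero.
  split=> [_ _|]; first exact: ltr01.
  split; first by rewrite proj_lifted_network.
  exists (fun j => K (nth 0 Rs j)); split=> [j|r r_in].
    by apply: K_pos; rewrite mem_nth.
  by rewrite reduced_rates_lift.
- split; first exact/detailed_balance_unit_rates/lifted_network_bidirectional.
    exact: lifted_network_conservative.
  by move=> _ /imfsetP[r r_in ->]; apply: lift_reactant_product.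
- exact: lifted_network_proj_nonzero.
- exact: lift_unique.
Qed.
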